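(* Let $X$ be a Baire space and $\sigma : X\to X$ a homeomorphism, inducing the automorphism $\widetilde{\sigma}(f) = f\circ\sigma^{-1}$ of $C(X)$. Let $A$ be a subalgebra of $C(X)$ invariant under $\widetilde{\sigma}$ and $\widetilde{\sigma}^{-1}$, which separates the points of $X$ and is such that for every non-empty open set $U\subseteq X$ there is a non-zero $f\in A$ vanishing on $X\setminus U$. Then $A$ is a maximal abelian subalgebra of $A\rtimes_{\widetilde{\sigma}}\mathbb{Z}$ if and only if the set $\mathrm{Per}^\infty(X) = \{x\in X : \sigma^n(x)\neq x \text{ for all } n\in\mathbb{Z}\setminus\{0\}\}$ of non-periodic points is dense in $X$.
   Context: $C(X)$ is the algebra of continuous complex-valued functions on $X$. The crossed product $A \rtimes_{\widetilde{\sigma}} \mathbb{Z}$ is the set of finitely supported functions $\mathbb{Z}\to A$, written $\sum_n f_n\delta^n$, with pointwise linear operations and multiplication determined by $(f_n\delta^n)*(g_m\delta^m)=f_n\,\widetilde{\sigma}^n(g_m)\,\delta^{n+m}$; $A$ is embedded as $\{f_0\delta^0\}$. *)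

From HB Require Import structures.
From mathcomp Require Import all_boot all_order all_algebra.
From mathcomp Require Import all_classical all_reals all_analysis.
From mathcomp Require Import complex.
Set Implicit Arguments. Unset Strict Implicit. Unset Printing Implicit Defensive.
Import Order.TTheory GRing.Theory Num.Theory.
Import numFieldTopology.Exports.
Local Open Scope ring_scope.
Local Open Scope classical_set_scope.

Definition baire_space (X : topologicalType) : Prop :=
  forall F : (set X)^nat, (forall i, open (F i) /\ dense (F i)) ->
    dense (\bigcap_i (F i)).

(* Continuity of a complex-valued function: C carries the product topology
   of R x R, i.e. real and imaginary parts are continuous. *)
Definition ccontinuous (R : realType) (X : topologicalType) (f : X -> R[i]) : Prop :=
  continuous (fun x => complex.Re (f x) : R) /\ continuous (fun x => complex.Im (f x) : R).

Definition zpow (X : Type) (sigma sigmai : X -> X) (n : int) : X -> X :=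
  match n with
  | Posz k => iter k sigma
  | Negz k => iter k.+1 sigmai
  end.

Definition sigt_pow (R : realType) (X : Type) (sigma sigmai : X -> X) (n : int)
  (f : X -> R[i]) : X -> R[i] := fun x => f (zpow sigma sigmai (- n) x).

(* A is a (complex, not necessarily unital) subalgebra of C(X). *)
Definition is_subalgebra_CX (R : realType) (X : topologicalType) (A : set (X -> R[i])) : Prop :=
  [/\ forall f, A f -> ccontinuous f,
      A (fun=> 0),
      forall f g, A f -> A g -> A (fun x => f x + g x),
      forall (c : R[i]) f, A f -> A (fun x => c * f x)
    & forall f g, A f -> A g -> A (fun x => f x * g x)].

(* Elements of the crossed product A x| Z: finitely supported maps Z -> A. *)
Definition supp (R : realType) (X : Type) (F : int -> X -> R[i]) : set int :=
  [set n | F n <> (fun=> 0)].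

Definition crossed (R : realType) (X : Type) (A : set (X -> R[i])) : set (int -> X -> R[i]) :=
  [set F | finite_set (supp F) /\ forall n, A (F n)].

(* Product in the crossed product:
   (sum_n F_n d^n) * (sum_m G_m d^m) = sum_k (sum_n F_n sigt^n(G_{k-n})) d^k. *)
Definition cp_mul (R : realType) (X : Type) (sigma sigmai : X -> X)
  (F G : int -> X -> R[i]) : int -> X -> R[i] :=
  fun k x => \sum_(n \in supp F) F n x * sigt_pow sigma sigmai n (G (k - n)) x.

Definition cp_add (R : realType) (X : Type) (F G : int -> X -> R[i]) : int -> X -> R[i] :=
  fun k x => F k x + G k x.

Definition cp_scale (R : realType) (X : Type) (c : R[i]) (F : int -> X -> R[i]) :
  int -> X -> R[i] := fun k x => c * F k x.

Definition cp_zero (R : realType) (X : Type) : int -> X -> R[i] := fun _ _ => 0.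

Definition cp_subalgebra (R : realType) (X : Type) (sigma sigmai : X -> X)
  (B S : set (int -> X -> R[i])) : Prop :=
  [/\ S `<=` B, S (@cp_zero R X),
      forall F G, S F -> S G -> S (cp_add F G),
      forall c F, S F -> S (cp_scale c F)
    & forall F G, S F -> S G -> S (cp_mul sigma sigmai F G)].

Definition cp_commutative (R : realType) (X : Type) (sigma sigmai : X -> X)
  (S : set (int -> X -> R[i])) : Prop :=
  forall F G, S F -> S G -> cp_mul sigma sigmai F G = cp_mul sigma sigmai G F.

Definition maximal_abelian (R : realType) (X : Type) (sigma sigmai : X -> X)
  (B S : set (int -> X -> R[i])) : Prop :=
  [/\ cp_subalgebra sigma sigmai B S, cp_commutative sigma sigmai S
    & forall T, cp_subalgebra sigma sigmai B T -> cp_commutative sigma sigmai T ->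
        S `<=` T -> T = S].

(* The canonical copy of A in the crossed product: elements f d^0. *)
Definition embA (R : realType) (X : Type) (A : set (X -> R[i])) : set (int -> X -> R[i]) :=
  [set F | A (F 0) /\ forall n, n != 0 -> F n = (fun=> 0)].

Definition Per_infty (X : Type) (sigma sigmai : X -> X) : set X :=
  [set x | forall n : int, n != 0 -> zpow sigma sigmai n x <> x].

(* Testing F = Σ F_n δ^n against g δ^0 gives g(x) F_n(x) = F_n(x) g(σ^-n x) for every
   g in A; as A separates points, F commutes with A exactly when each F_n vanishes off
   the fixed points of σ^n.  On such elements the twist σ~^n in the product is
   invisible, so they form a commutative subalgebra containing A, and A is maximal
   abelian iff this subalgebra is A itself.
   If the non-periodic points are dense, the continuous coefficients F_n, n <> 0,
   vanish on a dense set, hence everywhere.  If they are not dense, apply the Baire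
   property inside an open set free of non-periodic points to the open sets
   {x | σ^n x <> x}: some σ^n, n > 0, is the identity on a non-empty open set V, and
   f δ^n with 0 <> f in A supported in V commutes with A without lying in A. *)

From HB Require Import structures.
From mathcomp Require Import all_boot all_order all_algebra.
From mathcomp Require Import all_classical all_reals all_analysis.
From mathcomp Require Import complex.
Import Order.TTheory GRing.Theory Num.Theory.
Import numFieldTopology.Exports.
Local Open Scope ring_scope.
Local Open Scope classical_set_scope.
Set Implicit Arguments. Unset Strict Implicit. Unset Printing Implicit Defensive.

Section Iterates.
Variables (T : Type) (sigma sigmai : T -> T).
Hypotheses (sigmaK : cancel sigma sigmai) (sigmaiK : cancel sigmai sigma).
Local Notation zpow := (zpow sigma sigmai).

Lemma zpowS n x : zpow (n + 1) x = sigma (zpow n x).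
Proof.
case: n => [k|[|k]].
- by rewrite -PoszD addn1.
- by rewrite /= sigmaiK.
- by rewrite (_ : Negz k.+1 + 1 = Negz k) //= !NegzE -[k.+2]addn1 PoszD opprD subrK.
Qed.

Lemma zpowSN n x : zpow (n - 1) x = sigmai (zpow n x).
Proof. by rewrite -{2}(subrK 1 n) zpowS sigmaK. Qed.

Lemma zpowD a b x : zpow (a + b) x = zpow a (zpow b x).
Proof.
elim/int_rec: a => [|n IH|n IH]; first by rewrite add0r.
- by rewrite -addn1 PoszD addrAC zpowS IH -zpowS.
- by rewrite -addn1 PoszD opprD addrAC zpowSN IH -zpowSN.
Qed.

Lemma zpowNK n : cancel (zpow n) (zpow (- n)).
Proof. by move=> x; rewrite -zpowD addNr. Qed.

Lemma zpowN_fixed n x : zpow n x = x -> zpow (- n) x = x.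
Proof. by move=> fix_x; rewrite -{1}fix_x zpowNK. Qed.

Lemma aperiodic_Per_infty x :
  (forall i, iter i.+1 sigma x <> x) -> Per_infty sigma sigmai x.
Proof.
move=> aper [[|k]|k] // _ fix_x; first exact: aper fix_x.
by apply: (aper k); have := zpowN_fixed fix_x; rewrite NegzE opprK.
Qed.

End Iterates.

Section ComplexContinuity.
Variables (R : realType) (X : topologicalType).

Lemma open_neq_real (p q : X -> R) :
  continuous p -> continuous q -> open [set y | p y != q y].
Proof.
move=> p_cont q_cont.
have -> : [set y | p y != q y] = (fun y => p y - q y) @^-1` [set r | r != 0].
  by apply/seteqP; split=> y /=; rewrite subr_eq0.
apply: open_comp; last exact: open_neq.
by move=> y _; apply: cvgB; [exact: p_cont | exact: q_cont].
Qed.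

Lemma open_neq_ccontinuous (f g : X -> R[i]) :
  ccontinuous f -> ccontinuous g -> open [set y | f y <> g y].
Proof.
move=> [f_re f_im] [g_re g_im].
have -> : [set y | f y <> g y] = [set y | complex.Re (f y) != complex.Re (g y)]
    `|` [set y | complex.Im (f y) != complex.Im (g y)].
  apply/seteqP; split=> y /=; last by case=> /eqP neq fg; rewrite fg in neq.
  by move=> /eqP; rewrite eq_complex negb_and => /orP.
by apply: openU; apply: open_neq_real.
Qed.

Lemma ccontinuous_comp (f : X -> R[i]) (h : X -> X) :
  ccontinuous f -> continuous h -> ccontinuous (f \o h).
Proof.
move=> [f_re f_im] h_cont; split=> y.
- exact: (continuous_comp (h_cont y) (f_re _)).
- exact: (continuous_comp (h_cont y) (f_im _)).
Qed.

Lemma ccontinuous_dense_eq0 (D : set X) (f : X -> R[i]) :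
  dense D -> ccontinuous f -> (forall x, D x -> f x = 0) -> f = fun=> 0.
Proof.
move=> D_dense f_cont f_D; apply/funext => y; apply: contrapT => fy.
have cst0_cont : ccontinuous (fun _ : X => 0 : R[i]) by split=> ?; exact: cvg_cst.
have [|z [fz Dz]] := D_dense _ _ (open_neq_ccontinuous f_cont cst0_cont).
  by exists y.
exact: fz (f_D z Dz).
Qed.

Lemma continuous_iter (h : X -> X) : continuous h -> forall n, continuous (iter n h).
Proof.
move=> h_cont; elim=> [|n IH] x; first exact: cvg_id.
exact: continuous_comp (IH x) (h_cont _).
Qed.

Lemma open_nonfixed (P : set (X -> R[i])) (h : X -> X) :
  (forall f, P f -> ccontinuous f) ->
  (forall x y, x <> y -> exists2 f, P f & f x <> f y) ->
  continuous h -> open [set y | h y <> y].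
Proof.
move=> P_cont P_sep h_cont.
have -> : [set y | h y <> y] = \bigcup_(f in P) [set y | (f \o h) y <> f y].
  apply/seteqP; split=> y /=; last by case=> f _ /= fhy hy; rewrite hy in fhy.
  by move=> /P_sep[f Pf fhy]; exists f.
apply: bigcup_open => f Pf.
by apply: open_neq_ccontinuous (ccontinuous_comp (P_cont f Pf) h_cont) (P_cont f Pf).
Qed.

End ComplexContinuity.

Lemma baire_open_meets_bigcap (X : topologicalType) (G : (set X)^nat) (O : set X) :
  baire_space X -> (forall i, open (G i)) -> open O -> O !=set0 ->
  (forall i V, open V -> V !=set0 -> V `<=` O -> V `&` G i !=set0) ->
  O `&` \bigcap_i G i !=set0.
Proof.
move=> baireX G_open O_open O0 G_dense.
have [|x [Ox Gx]] := baireX (fun i => G i `|` (~` O)°) _ O O0 O_open.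
  move=> i; split; first exact: (openU (G_open i) (@open_interior _ _)).
  move=> W W0 W_open; have [WO|WO0] := pselect (W `&` O !=set0).
    have [y [[Wy _] Gy]] := G_dense i _ (openI W_open O_open) WO (@subIsetr _ _ _).
    by exists y; split; [|left].
  have WcO : W `<=` (~` O)°.
    by rewrite -open_subsetE // => w Ww Ow; apply: WO0; exists w.
  by have [w Ww] := W0; exists w; split; [|right; apply: WcO].
exists x; split=> // i _.
by case: (Gx i I) => // /interior_subset.
Qed.

Section BaireDynamics.
Variables (X : topologicalType) (sigma sigmai : X -> X).
Hypotheses (sigmaK : cancel sigma sigmai) (sigmaiK : cancel sigmai sigma).

Lemma dense_Per_infty : baire_space X ->
  (forall n, open [set y | iter n.+1 sigma y <> y]) ->
  (forall n V, open V -> V !=set0 -> exists2 y, V y & iter n.+1 sigma y <> y) ->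
  dense (Per_infty sigma sigmai).
Proof.
move=> baireX nonfixed_open nowhere_periodic O O0 O_open.
have [|x [Ox aper]] := baire_open_meets_bigcap baireX nonfixed_open O_open O0.
  by move=> i V V_open V0 _; have [y Vy] := nowhere_periodic i V V_open V0; exists y.
by exists x; split=> //; apply: aperiodic_Per_infty => // i; exact: aper i I.
Qed.

End BaireDynamics.

Section CrossedProduct.
Variables (R : realType) (X : Type) (sigma sigmai : X -> X) (A : set (X -> R[i])).
Hypotheses (sigmaK : cancel sigma sigmai) (sigmaiK : cancel sigmai sigma).
Local Notation zpow := (zpow sigma sigmai).
Local Notation sigt_pow := (@sigt_pow R X sigma sigmai).
Local Notation cp_mul := (@cp_mul R X sigma sigmai).

Lemma sigt_pow0 f : sigt_pow 0 f = f.
Proof. by apply/funext => x; rewrite /sigt_pow oppr0. Qed.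

Lemma sigt_powD m n f : sigt_pow (m + n) f = sigt_pow m (sigt_pow n f).
Proof. by apply/funext => x; rewrite /sigt_pow -zpowD // opprD addrC. Qed.

Lemma sigt_pow_closed :
  (forall f, A f -> A (sigt_pow 1 f)) -> (forall f, A f -> A (sigt_pow (-1) f)) ->
  forall n f, A f -> A (sigt_pow n f).
Proof.
move=> A_sigt1 A_sigtN1; elim/int_rec => [|n IH|n IH] f Af.
- by rewrite sigt_pow0.
- by rewrite -addn1 PoszD addrC sigt_powD; apply/A_sigt1/IH.
- by rewrite -addn1 PoszD opprD addrC sigt_powD; apply/A_sigtN1/IH.
Qed.

(* [cp_mono n f] is the monomial [f δ^n]. *)
Definition cp_mono (n : int) (f : X -> R[i]) : int -> X -> R[i] :=
  fun k => if k == n then f else fun=> 0.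

Definition fixpoint_supported (F : int -> X -> R[i]) : Prop :=
  forall k x, zpow k x <> x -> F k x = 0.

Lemma cp_mulE F G k x :
  cp_mul F G k x = \sum_(n \in [set: int]) F n x * sigt_pow n (G (k - n)) x.
Proof.
rewrite /cp_mul (fsbig_widen _ setT) // => n [_ /contrapT Fn0].
by rewrite /preimage /= Fn0 mul0r.
Qed.

Lemma cp_mul_mono0l g F k x : cp_mul (cp_mono 0 g) F k x = g x * F k x.
Proof.
rewrite cp_mulE -(fsbig_widen [set 0] setT) // ?fsbig_set1.
  by rewrite /cp_mono eqxx sigt_pow0 subr0.
by move=> n [_ /eqP n0]; rewrite /preimage /= /cp_mono (negbTE n0) mul0r.
Qed.

Lemma cp_mul_mono0r g F k x :
  cp_mul F (cp_mono 0 g) k x = F k x * g (zpow (- k) x).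
Proof.
rewrite cp_mulE -(fsbig_widen [set k] setT) // ?fsbig_set1.
  by rewrite /cp_mono subrr eqxx.
move=> n [_ /eqP nk]; rewrite /preimage /= /cp_mono.
by rewrite subr_eq0 eq_sym (negbTE nk) /sigt_pow mulr0.
Qed.

Lemma cp_mul_fixpoint_supportedE F G k x : fixpoint_supported F ->
  cp_mul F G k x = \sum_(n \in [set: int]) F n x * G (k - n) x.
Proof.
move=> F_fix; rewrite cp_mulE; apply: eq_fsbigr => n _.
have [->|Fn] := eqVneq (F n x) 0; first by rewrite !mul0r.
have n_fix : zpow n x = x by apply: contrapT => /F_fix Fn0; rewrite Fn0 eqxx in Fn.
by rewrite /sigt_pow zpowN_fixed.
Qed.

Lemma fixpoint_supported_comm F G :
  fixpoint_supported F -> fixpoint_supported G -> cp_mul F G = cp_mul G F.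
Proof.
move=> F_fix G_fix; apply/funext => k; apply/funext => x.
rewrite !cp_mul_fixpoint_supportedE // (reindex_fsbigT (fun n => k - n)).
  by apply: eq_fsbigr => n _; rewrite subKr mulrC.
exact: (inv_bij (subKr k)).
Qed.

Lemma fixpoint_supported_mul F G :
  fixpoint_supported F -> fixpoint_supported G -> fixpoint_supported (cp_mul F G).
Proof.
move=> F_fix G_fix k x k_nfix; rewrite cp_mul_fixpoint_supportedE //.
apply: fsbig1 => n _; have [->|n_nfix] := pselect (F n x = 0); first by rewrite mul0r.
have n_fix : zpow n x = x by apply: contrapT => /F_fix.
rewrite G_fix ?mulr0 // => kn_fix; apply: k_nfix.
by rewrite -(subrK n k) zpowD // n_fix.
Qed.

Lemma fixpoint_supported_cp_mono n f :
  (forall x, zpow n x <> x -> f x = 0) -> fixpoint_supported (cp_mono n f).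
Proof. by move=> f0 k x; rewrite /cp_mono; case: eqP => // ->; apply: f0. Qed.

Hypotheses (A0 : A (fun=> 0)) (AD : forall f g, A f -> A g -> A (fun x => f x + g x))
  (AZ : forall c f, A f -> A (fun x => c * f x))
  (AM : forall f g, A f -> A g -> A (fun x => f x * g x))
  (A_sigt : forall n f, A f -> A (sigt_pow n f)).

Lemma sum_closed (I : Type) (s : seq I) (h : I -> X -> R[i]) :
  (forall i, A (h i)) -> A (fun x => \sum_(i <- s) h i x).
Proof.
move=> Ah; elim: s => [|j s IH].
  by under eq_fun do rewrite big_nil.
by under eq_fun do rewrite big_cons; apply: AD.
Qed.

Lemma crossed_add F G : crossed A F -> crossed A G -> crossed A (cp_add F G).
Proof.
move=> [F_fin FA] [G_fin GA]; split=> [|n]; last exact: AD.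
apply: (sub_finite_set _ (_ : finite_set (supp F `|` supp G))).
  move=> k FGk; apply: contrapT => /not_orP[/contrapT Fk /contrapT Gk]; apply: FGk.
  by apply/funext => x; rewrite /cp_add Fk Gk addr0.
by rewrite finite_setU.
Qed.

Lemma crossed_scale c F : crossed A F -> crossed A (cp_scale c F).
Proof.
move=> [F_fin FA]; split=> [|n]; last exact: AZ.
apply: (sub_finite_set _ F_fin) => k cFk Fk; apply: cFk.
by apply/funext => x; rewrite /cp_scale Fk mulr0.
Qed.

Lemma crossed_zero : crossed A (@cp_zero R X).
Proof.
split=> [|n]; last exact: A0.
by apply: (sub_finite_set _ (finite_set0 int)) => k /(_ erefl).
Qed.

Lemma crossed_mul F G : crossed A F -> crossed A G -> crossed A (cp_mul F G).
Proof.
move=> [F_fin FA] [G_fin GA]; split=> [|k].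
  apply: (sub_finite_set _ (finite_image (fun p => p.1 + p.2) (finite_setX F_fin G_fin))).
  move=> k FGk; apply: contrapT => not_sum; apply: FGk.
  apply/funext => x; rewrite /cp_mul; apply: fsbig1 => n Fn.
  suff -> : G (k - n) = fun=> 0 by rewrite /sigt_pow mulr0.
  apply: contrapT => Gkn; apply: not_sum; exists (n, k - n) => //=.
  by rewrite addrC subrK.
rewrite /cp_mul; under eq_fun do rewrite fsbig_finite //.
by apply: sum_closed => n; apply/AM/A_sigt.
Qed.

Lemma crossed_cp_mono n f : A f -> crossed A (cp_mono n f).
Proof.
move=> Af; split=> [|k]; last by rewrite /cp_mono; case: ifP.
apply: (sub_finite_set _ (finite_set1 n)) => k.
by rewrite /supp /cp_mono /=; case: eqP => // _ /(_ erefl).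
Qed.

Lemma periodic_cp_mono_fixpoint_supported n (V : set X) f : A f ->
  (forall y, V y -> iter n.+1 sigma y = y) -> (forall x, ~ V x -> f x = 0) ->
  (crossed A `&` fixpoint_supported) (cp_mono n.+1 f).
Proof.
move=> Af V_fix f_V; split; first exact: crossed_cp_mono.
apply: fixpoint_supported_cp_mono => x x_nfix; apply: f_V => /V_fix.
exact: x_nfix.
Qed.

Lemma embA_cp_mono0 f : A f -> embA A (cp_mono 0 f).
Proof. by move=> Af; split=> [|k /negbTE k0]; rewrite /cp_mono ?eqxx ?k0. Qed.

Lemma embA_cp_mono0E F : embA A F -> F = cp_mono 0 (F 0).
Proof.
move=> [_ F0]; apply/funext => k; rewrite /cp_mono.
by case: eqP => [->|/eqP /F0].
Qed.

Lemma embA_sub_fixpoint_supported : embA A `<=` crossed A `&` fixpoint_supported.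
Proof.
move=> F embF; rewrite (embA_cp_mono0E embF); split.
  exact/crossed_cp_mono/(proj1 embF).
by apply: fixpoint_supported_cp_mono => x.
Qed.

Lemma cp_subalgebra_embA : cp_subalgebra sigma sigmai (crossed A) (embA A).
Proof.
split.
- by move=> F /embA_sub_fixpoint_supported[].
- by split.
- move=> F G [F0A F0] [G0A G0]; split=> [|n n0]; first exact: AD.
  by apply/funext => x; rewrite /cp_add F0 // G0 // addr0.
- move=> c F [F0A F0]; split=> [|n n0]; first exact: AZ.
  by apply/funext => x; rewrite /cp_scale F0 // mulr0.
- move=> F G [F0A F0] [G0A G0]; rewrite (embA_cp_mono0E (conj F0A F0)).
  split=> [|n n0]; last by apply/funext => x; rewrite cp_mul_mono0l G0 // mulr0.
  suff -> : cp_mul (cp_mono 0 (F 0)) G 0 = fun x => F 0 x * G 0 x by apply: AM.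
  by apply/funext => x; rewrite cp_mul_mono0l.
Qed.

Lemma cp_subalgebra_fixpoint_supported :
  cp_subalgebra sigma sigmai (crossed A) (crossed A `&` fixpoint_supported).
Proof.
split.
- by move=> F [].
- by split; [exact: crossed_zero | by []].
- move=> F G [FA F_fix] [GA G_fix]; split; first exact: crossed_add.
  by move=> k x k_nfix; rewrite /cp_add F_fix // G_fix // addr0.
- move=> c F [FA F_fix]; split; first exact: crossed_scale.
  by move=> k x k_nfix; rewrite /cp_scale F_fix // mulr0.
- move=> F G [FA F_fix] [GA G_fix].
  by split; [exact: crossed_mul | exact: fixpoint_supported_mul].
Qed.

Lemma cp_commutative_fixpoint_supported :
  cp_commutative sigma sigmai (crossed A `&` fixpoint_supported).
Proof. by move=> F G [_ F_fix] [_ G_fix]; exact: fixpoint_supported_comm. Qed.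

Lemma cp_commutative_embA : cp_commutative sigma sigmai (embA A).
Proof.
move=> F G /embA_sub_fixpoint_supported[_ F_fix] /embA_sub_fixpoint_supported[_ G_fix].
exact: fixpoint_supported_comm.
Qed.

Lemma commute_cp_mono0_coef_eq0 F :
  (forall x y, x <> y -> exists2 g, A g & g x <> g y) ->
  (forall g, A g -> cp_mul (cp_mono 0 g) F = cp_mul F (cp_mono 0 g)) ->
  forall k x, zpow (- k) x <> x -> F k x = 0.
Proof.
move=> A_sep F_comm k x k_nfix; have [g Ag gx] := A_sep _ _ k_nfix.
have := congr1 (fun H => H k x) (F_comm g Ag).
rewrite /= cp_mul_mono0l cp_mul_mono0r => gF_Fg.
apply: contrapT => /eqP Fk; apply: gx; apply: (mulIf Fk).
by rewrite /= gF_Fg mulrC.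
Qed.

End CrossedProduct.

Lemma embA_of_commute_A (R : realType) (X : topologicalType) (sigma sigmai : X -> X)
    (A : set (X -> R[i])) F :
  dense (Per_infty sigma sigmai) -> (forall f, A f -> ccontinuous f) ->
  (forall x y, x <> y -> exists2 g, A g & g x <> g y) -> crossed A F ->
  (forall g, A g -> cp_mul sigma sigmai (cp_mono 0 g) F = cp_mul sigma sigmai F (cp_mono 0 g)) ->
  embA A F.
Proof.
move=> Per_dense A_cont A_sep [_ FA] F_comm; split=> // k k0.
apply: (ccontinuous_dense_eq0 Per_dense (A_cont _ (FA k))) => x Per_x.
by apply: (commute_cp_mono0_coef_eq0 A_sep F_comm); apply: Per_x; rewrite oppr_eq0.
Qed.

Unset Implicit Arguments. Set Strict Implicit.

Theorem theorem3p7 (R : realType) (X : topologicalType) (sigma sigmai : X -> X)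
  (A : set (X -> R[i])) :
  baire_space X ->
  continuous sigma -> continuous sigmai ->
  cancel sigma sigmai -> cancel sigmai sigma ->
  is_subalgebra_CX A ->
  (forall f, A f -> A (sigt_pow sigma sigmai 1 f)) ->
  (forall f, A f -> A (sigt_pow sigma sigmai (-1) f)) ->
  (forall x y : X, x <> y -> exists2 f, A f & f x <> f y) ->
  (forall U : set X, open U -> U !=set0 ->
     exists2 f, A f & f <> (fun=> 0) /\ (forall x, ~ U x -> f x = 0)) ->
  (maximal_abelian sigma sigmai (crossed A) (embA A) <->
   dense (Per_infty sigma sigmai)).
Proof.
move=> baireX sigma_cont _ sigmaK sigmaiK [A_cont A0 AD AZ AM] A_sigt1 A_sigtN1.
move=> A_sep A_local; have A_sigt := sigt_pow_closed sigmaK sigmaiK A_sigt1 A_sigtN1.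
split.
- case=> _ _ embA_max.
  have C_embA := embA_max _
    (cp_subalgebra_fixpoint_supported sigmaK sigmaiK A0 AD AZ AM A_sigt)
    (cp_commutative_fixpoint_supported sigmaK sigmaiK)
    (embA_sub_fixpoint_supported sigma sigmai A0).
  apply: dense_Per_infty => // [n|n V V_open V0].
    by apply: open_nonfixed A_cont A_sep _; apply: continuous_iter.
  apply: contrapT => V_periodic.
  have V_fix y : V y -> iter n.+1 sigma y = y.
    by move=> Vy; apply: contrapT => y_nfix; apply: V_periodic; exists y.
  have [f Af [f_neq0 f_V]] := A_local V V_open V0.
  have := periodic_cp_mono_fixpoint_supported sigmai A0 Af V_fix f_V.
  by rewrite C_embA => -[_ /(_ n.+1%:Z isT)]; rewrite /cp_mono eqxx.
- move=> Per_dense; split.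
  + exact: cp_subalgebra_embA.
  + exact: cp_commutative_embA.
  move=> T [T_crossed _ _ _ _] T_comm embA_T; apply/seteqP; split=> // F TF.
  apply: (embA_of_commute_A Per_dense A_cont A_sep (T_crossed F TF)) => g Ag.
  exact: T_comm (embA_T _ (embA_cp_mono0 Ag)) TF.
Qed.
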